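(* Let $V$ be a finite set, let $d$ be a monotone and consistent symmetric set function on $V$, and let $\tau\in\mathbb{R}$. Then the function $\hat d$ defined by $\hat d(S,T)=\min\{\tau,d(S,T)\}$ for disjoint $S,T\subseteq V$ is a monotone and consistent symmetric set function on $V$.
   Context: A symmetric set function $d$ on a finite set $V$ assigns a real number $d(S,T)$ to every ordered pair $(S,T)$ of disjoint subsets of $V$, such that $d(S,T)=d(T,S)$. It is monotone if $d(S,T')\leq d(S,T)$ whenever $S,T$ are disjoint and $T'\subseteq T$. It is consistent if for all pairwise disjoint $R,S,T\subseteq V$, $d(S,R)\geq d(T,R)$ implies $d(S,R\cup T)\geq d(S\cup R,T)$. *)

From mathcomp Require Import all_boot all_order all_algebra.
From mathcomp Require Import reals.
Set Implicit Arguments. Unset Strict Implicit. Unset Printing Implicit Defensive.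
Import Order.TTheory GRing.Theory Num.Theory.
Local Open Scope ring_scope.

(* A set function on V: assigns a real to each pair (S,T) of subsets; only its
   values on disjoint pairs matter. *)
Definition setfun (R : realType) (V : finType) := {set V} -> {set V} -> R.

Definition symmetric_sf (R : realType) (V : finType) (d : setfun R V) : Prop :=
  forall S T : {set V}, [disjoint S & T] -> d S T = d T S.

Definition monotone_sf (R : realType) (V : finType) (d : setfun R V) : Prop :=
  forall S T T' : {set V}, [disjoint S & T] -> T' \subset T -> d S T' <= d S T.

Definition consistent_sf (R : realType) (V : finType) (d : setfun R V) : Prop :=
  forall R0 S T : {set V},
    [disjoint R0 & S] -> [disjoint R0 & T] -> [disjoint S & T] ->
    d T R0 <= d S R0 -> d (S :|: R0) T <= d S (R0 :|: T).

Definition trunc_sf (R : realType) (V : finType) (tau : R) (d : setfun R V)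
  : setfun R V := fun S T => Num.min tau (d S T).

From mathcomp Require Import all_boot all_order all_algebra.
From mathcomp Require Import reals.
Import Order.TTheory GRing.Theory Num.Theory.
Local Open Scope ring_scope.

(* For
   consistency, if the truncated premise holds but the untruncated one fails,
   then d(T,R) > d(S,R) >= tau; monotonicity gives d(S, R u T) >= tau, so the
   truncated conclusion reduces to min(tau, _) <= tau. *)

Lemma min_le_min_gt_ge {disp : Order.disp_t} {T : orderType disp} {t x y : T} :
  (Order.min t x <= Order.min t y)%O -> (y < x)%O -> (t <= y)%O.
Proof.
move=> le_min_xy lt_yx; rewrite leNgt; apply/negP => lt_yt.
have : (y < Order.min t x)%O by rewrite lt_min lt_yt.
by rewrite ltNge (le_trans le_min_xy) // ge_min lexx orbT.
Qed.

Lemma disjoint_setUr (V : finType) (A B C : {set V}) :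
  [disjoint A & B] -> [disjoint A & C] -> [disjoint A & B :|: C].
Proof. by rewrite -!setI_eq0 setIUr setU_eq0 => -> ->. Qed.

Section Truncation.

Variables (R : realType) (V : finType) (d : setfun R V) (tau : R).

Lemma symmetric_trunc : symmetric_sf d -> symmetric_sf (trunc_sf tau d).
Proof. by move=> d_sym S T dis_ST; rewrite /trunc_sf d_sym. Qed.

Lemma monotone_trunc : monotone_sf d -> monotone_sf (trunc_sf tau d).
Proof. by move=> d_mono S T T' dis_ST sub_T'T; apply/le_min2/d_mono. Qed.

Lemma consistent_trunc :
  monotone_sf d -> consistent_sf d -> consistent_sf (trunc_sf tau d).
Proof.
move=> d_mono d_cons R0 S T dis_RS dis_RT dis_ST; rewrite /trunc_sf => le_trunc.
have [le_TS | lt_ST] := leP (d T R0) (d S R0).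
  exact/le_min2/d_cons.
have le_tau_S : tau <= d S R0 := min_le_min_gt_ge le_trunc lt_ST.
have dis_S_RT : [disjoint S & R0 :|: T].
  by apply: disjoint_setUr => //; rewrite disjoint_sym.
have le_S_SRT : d S R0 <= d S (R0 :|: T) by apply: d_mono => //; apply: subsetUl.
by rewrite (min_l (le_trans le_tau_S le_S_SRT)) ge_min lexx.
Qed.

End Truncation.

Theorem lemma3 (R : realType) (V : finType) (d : setfun R V) (tau : R) :
  symmetric_sf d -> monotone_sf d -> consistent_sf d ->
  [/\ symmetric_sf (trunc_sf tau d), monotone_sf (trunc_sf tau d)
    & consistent_sf (trunc_sf tau d)].
Proof.
move=> d_sym d_mono d_cons; split.
- exact: symmetric_trunc.
- exact: monotone_trunc.
- exact: consistent_trunc.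
Qed.
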